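(* Let $n\ge3$. The following relations hold in $\mathrm{YTL}_{d,n}(u)$: (1) $g_ig_{i+1}g_i+g_ig_{i+1}+g_{i+1}g_i+g_i+g_{i+1}+1=0$ for $1\le i<n-1$; (2) $(t_i-t_{i+2})(1+g_i)+(t_i-t_{i+1})(g_{i+1}+g_{i+1}g_i)=0$ for $1\le i<n-1$; (3) $(t_{i+2}-t_i)(1+g_{i+1})+(t_{i+2}-t_{i+1})(g_i+g_ig_{i+1})=0$ for $1\le i<n-1$; (4) $(t_{i+2}-t_{i+1})(t_{i+2}-t_i)(g_i+1)=0$ for $1\le i<n-1$; (5) $(t_{i-1}-t_{i+1})(t_{i-1}-t_i)(g_i+1)=0$ for $1<i\le n-1$; (6) $(t_i-t_{i+1})(t_{i+1}-t_{i+2})(t_i-t_{i+2})=0$ for $1\le i<n-1$.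
   Context: Let $d,n\ge1$ be integers and $u$ an indeterminate. The Yokonuma–Hecke algebra $\mathrm{Y}_{d,n}(u)$ is the associative $\mathbb{C}[u,u^{-1}]$-algebra generated by $g_1,\dots,g_{n-1},t_1,\dots,t_n$ subject to: $g_ig_j=g_jg_i$ for $|i-j|>1$; $g_ig_{i+1}g_i=g_{i+1}g_ig_{i+1}$ for $1\le i\le n-2$; $t_it_j=t_jt_i$ for all $i,j$; $t_jg_i=g_it_{s_i(j)}$ for all $i,j$, where $s_i$ is the transposition $(i,i+1)$; $t_j^d=1$ for all $j$; and $g_i^2=1+(u-1)e_i+(u-1)e_ig_i$, where $e_i=\frac1d\sum_{s=0}^{d-1}t_i^st_{i+1}^{-s}$. For $n\ge3$, the Yokonuma–Temperley–Lieb algebra $\mathrm{YTL}_{d,n}(u)$ is the quotient of $\mathrm{Y}_{d,n}(u)$ by the two-sided ideal generated by the elements $g_ig_{i+1}g_i+g_ig_{i+1}+g_{i+1}g_i+g_i+g_{i+1}+1$, $1\le i\le n-2$; images of the generators in the quotient are denoted by the same letters. *)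

From HB Require Import structures.
From mathcomp Require Import all_boot all_order all_algebra.
Set Implicit Arguments. Unset Strict Implicit. Unset Printing Implicit Defensive.
Import Order.TTheory GRing.Theory Num.Theory.
Local Open Scope ring_scope.

Definition swap_idx (i j : nat) : nat :=
  if j == i then i.+1 else if j == i.+1 then i else j.

Definition ytl_e (K : fieldType) (A : unitAlgType K) (d : nat)
    (t : nat -> A) (i : nat) : A :=
  (d%:R : K)^-1 *: \sum_(s < d) (t i ^+ s * t i.+1 ^- s).

Definition is_YH_family (K : fieldType) (A : unitAlgType K) (d n : nat)
    (u : A) (g t : nat -> A) : Prop :=
  (forall i j, (1 <= i <= n.-1)%N -> (1 <= j <= n.-1)%N ->
         ((i.+1 < j) || (j.+1 < i))%N -> g i * g j = g j * g i) /\
      (forall i, (1 <= i <= n - 2)%N ->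
         g i * g i.+1 * g i = g i.+1 * g i * g i.+1) /\
      (forall i j, (1 <= i <= n)%N -> (1 <= j <= n)%N -> t i * t j = t j * t i) /\
      (forall i j, (1 <= i <= n.-1)%N -> (1 <= j <= n)%N ->
         t j * g i = g i * t (swap_idx i j)) /\
      (forall j, (1 <= j <= n)%N -> t j ^+ d = 1) /\
      (forall i, (1 <= i <= n.-1)%N ->
         g i ^+ 2 = 1 + (u - 1) * ytl_e d t i + (u - 1) * ytl_e d t i * g i).

Definition ytl_rel (A : ringType) (g : nat -> A) (i : nat) : A :=
  g i * g i.+1 * g i + g i * g i.+1 + g i.+1 * g i + g i + g i.+1 + 1.

Definition is_YTL_family (K : fieldType) (A : unitAlgType K) (d n : nat)
    (u : A) (g t : nat -> A) : Prop :=
  is_YH_family d n u g t /\ (forall i, (1 <= i <= n - 2)%N -> ytl_rel g i = 0).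

(* Everything happens locally in three consecutive indices: write
   a = t_i, b = t_(i+1), c = t_(i+2), g1 = g_i, g2 = g_(i+1).  The framing
   generators a, b, c commute and are d-th roots of unity, g1 swaps a and b
   and fixes c, g2 swaps b and c and fixes a, and the YTL relation says that
   the "sum over S_3"  S = g1g2g1 + g1g2 + g2g1 + g1 + g2 + 1  vanishes.

   - Relation (2) is  a*S - S*c = 0 : each word W of S satisfies
     W*c = x*W for some x in {a,b,c}, so a*W - W*c = (a - x)*W.
   - For commuting d-th roots of unity x, y the element
     esum x y = sum_k x^k y^(d-k)  (d times the idempotent e of the paper)
     is killed by x - y, while averaging Y |-> sum_k x^k Y x^(-k) turns a
     word W with W*x = y*W into esum x y * W.  Averaging (2) over a and over
     c and multiplying by suitable differences kills all terms but one,
     which gives (6) and then, with the help of (6), relation (5) up to a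
     factor (a - b)^2; since d is invertible, (x - y)^2 Z = 0 forces
     (x - y) Z = 0, which yields (5).
   - Relations (3) and (4) are (2) and (5) for the mirrored data
     (c, b, a, g2, g1), which satisfies the same hypotheses thanks to the
     braid relation. *)

From HB Require Import structures.
From mathcomp Require Import all_boot all_order all_algebra ssrAC zify.
Import GRing.Theory.
Local Open Scope ring_scope.
Set Implicit Arguments. Unset Strict Implicit.

Section Intertwining.
Variable A : pzRingType.
Implicit Types (x y z P Q Y : A).

Lemma intertwineM P Q x y z : P * x = y * P -> Q * y = z * Q ->
  Q * P * x = z * (Q * P).
Proof. by move=> Pxy Qyz; rewrite -mulrA Pxy mulrA Qyz mulrA. Qed.

Lemma intertwineX Y x y : Y * x = y * Y -> forall m, Y * x ^+ m = y ^+ m * Y.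
Proof.
move=> Yxy; elim=> [|m IH]; first by rewrite !expr0 mulr1 mul1r.
by rewrite !exprS mulrA Yxy -mulrA IH mulrA.
Qed.

Definition twist x z Y : A := x * Y - Y * z.

Lemma twist_is_zmod_morphism x z : zmod_morphism (twist x z).
Proof.
move=> Y Z; rewrite /twist mulrBr mulrBl !opprB addrACA [RHS]addrACA.
by congr (_ + _); apply: addrC.
Qed.

HB.instance Definition _ x z :=
  GRing.isZmodMorphism.Build A A (twist x z) (twist_is_zmod_morphism x z).

Lemma twist_word x y z Y : Y * z = y * Y -> twist x z Y = (x - y) * Y.
Proof. by move=> Yzy; rewrite /twist Yzy mulrBl. Qed.
End Intertwining.

Section Averaging.
Variables (A : pzRingType) (d : nat).
Implicit Types (x y z p W Y Z : A).

(* For d-th roots of unity x, y, esum x y = sum_k x^k y^-k is d times the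
   idempotent e(x, y) of the Yokonuma-Hecke algebra. *)
Definition esum x y : A := \sum_(0 <= k < d) x ^+ k * y ^+ (d - k).

Definition conj_avg x Y : A := \sum_(0 <= k < d) x ^+ k * Y * x ^+ (d - k).

Lemma conj_avg_is_zmod_morphism x : zmod_morphism (conj_avg x).
Proof.
move=> Y Z; rewrite /conj_avg -sumrB; apply: eq_bigr => k _.
by rewrite mulrBr mulrBl.
Qed.

HB.instance Definition _ x :=
  GRing.isZmodMorphism.Build A A (conj_avg x) (conj_avg_is_zmod_morphism x).

Lemma commr_esum z x y : GRing.comm z x -> GRing.comm z y -> GRing.comm z (esum x y).
Proof. by move=> zx zy; apply: commr_sum => k _; apply: commrM; apply: commrX. Qed.

Lemma esum_diag x : x ^+ d = 1 -> esum x x = d%:R.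
Proof.
move=> xd; rewrite /esum (eq_big_nat _ _ (F2 := fun _ => 1)).
  by rewrite sumr_const_nat subn0.
by move=> k /andP[_ kd]; rewrite -exprD subnKC ?xd // ltnW.
Qed.

Lemma subr_mul_esum x y : GRing.comm x y -> x ^+ d = 1 -> y ^+ d = 1 ->
  (x - y) * esum x y = 0.
Proof.
move=> xy xd yd; rewrite /esum mulr_sumr.
rewrite (telescope_sumr_eq (fun k => x ^+ k * y ^+ (d.+1 - k))) //.
  by rewrite subn0 subSnn expr0 xd mul1r expr1 (exprS y d) yd mulr1 mul1r subrr.
move=> k /andP[_ kd].
rewrite mulrBl; congr (_ - _); first by rewrite mulrA -exprS subSS.
by rewrite mulrA (commrX k (commr_sym xy)) -mulrA -exprS subSn // ltnW.
Qed.

Lemma subr_kills_esum_term x y p W : GRing.comm x y -> x ^+ d = 1 -> y ^+ d = 1 ->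
  GRing.comm p (x - y) -> (x - y) * (p * esum x y * W) = 0.
Proof.
by move=> xy xd yd px; rewrite !mulrA -px -(mulrA p) subr_mul_esum // mulr0 mul0r.
Qed.

Lemma esum_eigen x y W : GRing.comm x y -> y ^+ d = 1 -> x * W = y * W ->
  esum x y * W = W *+ d.
Proof.
move=> xy yd xyW.
have powW k : x ^+ k * W = y ^+ k * W.
  elim: k => [|k IH]; first by rewrite !expr0.
  by rewrite exprS -mulrA IH mulrA (commrX k xy) -mulrA xyW mulrA -exprSr.
rewrite /esum mulr_suml -[d in W *+ d]subn0 -sumr_const_nat.
apply: eq_big_nat => k /andP[_ kd].
rewrite (commrX _ (commr_sym (commrX k (commr_sym xy)))) -mulrA powW mulrA -exprD.
by rewrite subnK ?yd ?mul1r // ltnW.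
Qed.

Lemma conj_avg_word x y p Y : GRing.comm p x -> Y * x = y * Y ->
  conj_avg x (p * Y) = p * esum x y * Y.
Proof.
move=> px /intertwineX Yxy; rewrite /conj_avg /esum mulr_sumr mulr_suml.
apply: eq_big_nat => k _.
by rewrite -!mulrA Yxy !mulrA (commrX k px).
Qed.

Lemma conj_avg_fixed x p : GRing.comm p x -> x ^+ d = 1 -> conj_avg x p = p * d%:R.
Proof.
move=> px xd; rewrite -[p]mulr1 (conj_avg_word px (y := x)) ?mulr1 ?mul1r //.
by rewrite esum_diag.
Qed.

(* When d is regular, (x - y)^2 Z = 0 implies (x - y) Z = 0: the element
   W = (x - y) Z satisfies xW = yW, so d W = e(x, y) W = e(x, y)(x - y) Z = 0. *)
Lemma sqr_cancel x y Z : (forall w : A, w *+ d = 0 -> w = 0) ->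
  GRing.comm x y -> x ^+ d = 1 -> y ^+ d = 1 ->
  (x - y) * ((x - y) * Z) = 0 -> (x - y) * Z = 0.
Proof.
move=> d_reg xy xd yd xyZ; apply: d_reg.
have xW : x * ((x - y) * Z) = y * ((x - y) * Z).
  by apply/eqP; rewrite -subr_eq0 -mulrBl xyZ.
have xy_e : GRing.comm (x - y) (esum x y).
  apply: commr_esum; apply: commr_sym.
    exact: commrB (commr_refl x) xy.
  exact: commrB (commr_sym xy) (commr_refl y).
by rewrite -(esum_eigen xy yd xW) mulrA -xy_e subr_mul_esum // mul0r.
Qed.
End Averaging.

Section LocalRelations.
Variables (A : pzRingType) (d : nat) (a b c g1 g2 : A).
Hypothesis d_reg : forall w : A, w *+ d = 0 -> w = 0.
Hypotheses (ab : GRing.comm a b) (ac : GRing.comm a c) (bc : GRing.comm b c).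
Hypotheses (ad : a ^+ d = 1) (bd : b ^+ d = 1) (cd : c ^+ d = 1).
Hypotheses (g1a : g1 * a = b * g1) (g1b : g1 * b = a * g1) (g1c : g1 * c = c * g1).
Hypotheses (g2a : g2 * a = a * g2) (g2b : g2 * b = c * g2) (g2c : g2 * c = b * g2).
Hypothesis sum_S3 : g1 * g2 * g1 + g1 * g2 + g2 * g1 + g1 + g2 + 1 = 0.

(* The bicommutant of {a, b, c}: a commutative subring containing every
   polynomial expression in a, b, c; it handles all commutations below. *)
Definition bicomm p := forall q : A,
  GRing.comm q a -> GRing.comm q b -> GRing.comm q c -> GRing.comm q p.

Lemma bicomm_comm p q : bicomm p -> bicomm q -> GRing.comm p q.
Proof.
move=> Bp Bq; apply: Bq; apply: commr_sym; apply: Bp => //;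
  by [apply: commr_refl | apply: commr_sym].
Qed.

Lemma bicomm_a : bicomm a. Proof. by move=> q. Qed.
Lemma bicomm_b : bicomm b. Proof. by move=> q. Qed.
Lemma bicomm_c : bicomm c. Proof. by move=> q. Qed.
Lemma bicomm_nat m : bicomm m%:R. Proof. by move=> q *; apply: commr_nat. Qed.
Lemma bicommB p q : bicomm p -> bicomm q -> bicomm (p - q).
Proof. by move=> Bp Bq r *; apply: commrB; [apply: Bp | apply: Bq]. Qed.
Lemma bicommM p q : bicomm p -> bicomm q -> bicomm (p * q).
Proof. by move=> Bp Bq r *; apply: commrM; [apply: Bp | apply: Bq]. Qed.
Lemma bicomm_esum x y : bicomm x -> bicomm y -> bicomm (esum d x y).
Proof. by move=> Bx By r *; apply: commr_esum; [apply: Bx | apply: By]. Qed.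

Local Hint Resolve bicomm_a bicomm_b bicomm_c bicomm_nat bicommB bicommM bicomm_esum
  : bicomm.

Local Ltac commute := apply: bicomm_comm; auto with bicomm.

(* a S - S c = 0, computed word by word. *)
Lemma twisted_S3 : (a - b) * (g2 * g1) + (a - c) * g1 + (a - b) * g2 + (a - c) = 0.
Proof.
have := congr1 (twist a c) sum_S3; rewrite raddf0 !raddfD /=.
rewrite (twist_word _ (intertwineM g1c (intertwineM g2c g1b))).
rewrite (twist_word _ (intertwineM g2c g1b)) (twist_word _ (intertwineM g1c g2c)).
rewrite (twist_word _ g1c) (twist_word _ g2c) [twist a c 1]/twist mul1r mulr1.
by rewrite !subrr !mul0r !add0r.
Qed.

Lemma exchange_rel : (a - c) * (1 + g1) + (a - b) * (g2 + g2 * g1) = 0.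
Proof. by rewrite -twisted_S3 !mulrDr mulr1 addrA [LHS](ACl (4*2*3*1)). Qed.

(* Averaging (2) over <a> and multiplying by a - b removes the g1 term. *)
Lemma averaged_S3 : (a - b) * (a - b) * esum d a c * (g2 * g1)
  + (a - b) * (a - b) * d%:R * g2 + (a - b) * (a - c) * d%:R = 0.
Proof.
have H := congr1 (fun Y => (a - b) * conj_avg d a Y) twisted_S3.
rewrite /= raddf0 mulr0 3!raddfD /= in H.
rewrite (conj_avg_word _ _ (intertwineM g1a g2b)) in H; last by commute.
rewrite (conj_avg_word _ _ g1a) in H; last by commute.
rewrite (conj_avg_word _ _ g2a) in H; last by commute.
rewrite esum_diag // conj_avg_fixed // in H; last by commute.
rewrite !mulrDr subr_kills_esum_term ?addr0 // in H; last by commute.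
by rewrite -!mulrA in H *.
Qed.

(* Relation (6): average once more, now over <c>, and multiply by c - b. *)
Lemma triple_product : (a - b) * (b - c) * (a - c) = 0.
Proof.
have H := congr1 (fun Y => (c - b) * conj_avg d c Y) averaged_S3.
rewrite /= raddf0 mulr0 2!raddfD /= in H.
rewrite (conj_avg_word _ _ (intertwineM g1c g2c)) in H; last by commute.
rewrite (conj_avg_word _ _ g2c) in H; last by commute.
rewrite conj_avg_fixed // in H; last by commute.
rewrite 2!mulrDr !subr_kills_esum_term ?add0r // in H; try by commute.
have cbH : (c - b) * ((a - b) * (a - c)) = 0.
  by apply: d_reg; apply: d_reg; rewrite !mulr_natr !mulrnAr in H.
have ab_bc : GRing.comm (a - b) (b - c) by commute.
by rewrite ab_bc -mulrA -[b - c]opprB mulNr cbH oppr0.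
Qed.

(* Relation (5): multiply the averaged relation by a - c, rewrite
   (a - b)(a - c)^2 as (a - b)^2 (a - c) using (6), and cancel (a - b)^2. *)
Lemma fixed_point_rel : (a - c) * (a - b) * (g2 + 1) = 0.
Proof.
have H := congr1 (fun Y => (a - c) * Y) averaged_S3.
rewrite /= mulr0 2!mulrDr subr_kills_esum_term ?add0r // in H; last by commute.
have split_ac : a - c = (a - b) + (b - c) by rewrite addrA subrK.
have ac_abab : (a - c) * ((a - b) * (a - c)) = (a - c) * ((a - b) * (a - b)).
  rewrite {2}split_ac mulrDr mulrDr.
  have -> : (a - c) * ((a - b) * (b - c)) = (a - b) * (b - c) * (a - c) by commute.
  by rewrite triple_product addr0.
have ac_ab : GRing.comm (a - c) (a - b) by commute.
rewrite ac_ab -mulrA; apply: (sqr_cancel d_reg) => //; apply: d_reg.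
have abab_ac : GRing.comm ((a - b) * (a - b)) (a - c) by commute.
rewrite !mulrA abab_ac mulrDr mulr1 mulrnDl.
by rewrite -mulrA -(commr_nat g2 d) mulrA !mulr_natr !mulrnAr ac_abab in H.
Qed.
End LocalRelations.

(* All five local relations; (3) and (4) come from the mirrored data
   (c, b, a, g2, g1), whose S_3-sum agrees with the original one by the
   braid relation. *)
Lemma local_relations (A : pzRingType) (d : nat) (a b c g1 g2 : A) :
  (forall w : A, w *+ d = 0 -> w = 0) ->
  GRing.comm a b -> GRing.comm a c -> GRing.comm b c ->
  a ^+ d = 1 -> b ^+ d = 1 -> c ^+ d = 1 ->
  g1 * a = b * g1 -> g1 * b = a * g1 -> g1 * c = c * g1 ->
  g2 * a = a * g2 -> g2 * b = c * g2 -> g2 * c = b * g2 ->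
  g1 * g2 * g1 = g2 * g1 * g2 ->
  g1 * g2 * g1 + g1 * g2 + g2 * g1 + g1 + g2 + 1 = 0 ->
  [/\ (a - c) * (1 + g1) + (a - b) * (g2 + g2 * g1) = 0,
      (c - a) * (1 + g2) + (c - b) * (g1 + g1 * g2) = 0,
      (c - b) * (c - a) * (g1 + 1) = 0,
      (a - c) * (a - b) * (g2 + 1) = 0 &
      (a - b) * (b - c) * (a - c) = 0].
Proof.
move=> d_reg ab ac bc ad bd cd g1a g1b g1c g2a g2b g2c braid S3.
have S3' : g2 * g1 * g2 + g2 * g1 + g1 * g2 + g2 + g1 + 1 = 0.
  by rewrite -braid -S3 [LHS](ACl (1*3*2*5*4*6)).
have ba := commr_sym ab; have ca := commr_sym ac; have cb := commr_sym bc.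
split.
- exact: exchange_rel.
- by apply: (exchange_rel (a := c) (c := a) (g1 := g2) (g2 := g1)).
- have cb_ca : GRing.comm (c - b) (c - a).
    by apply: commrB; apply/commr_sym/commrB => //; apply: commr_refl.
  by rewrite cb_ca; apply: (fixed_point_rel (d := d) (a := c) (c := a) (g1 := g2) (g2 := g1)).
- by apply: (fixed_point_rel (d := d) (g1 := g1)).
- by apply: (triple_product (d := d) (g1 := g1) (g2 := g2)).
Qed.

Lemma char0_natmul_inj (K : fieldType) (V : lmodType K) (n : nat) (w : V) :
  [pchar K] =i pred0 -> (0 < n)%N -> w *+ n = 0 -> w = 0.
Proof.
move=> charK0 n_gt0 wn0.
have nK : (n%:R : K) != 0 by rewrite ((pcharf0P K).1 charK0 n) -lt0n.
by rewrite -[w]scale1r -(mulVf nK) -scalerA scaler_nat wn0 scaler0.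
Qed.

Lemma swap_idx_l i : swap_idx i i = i.+1.
Proof. by rewrite /swap_idx eqxx. Qed.

Lemma swap_idx_r i : swap_idx i i.+1 = i.
Proof. by rewrite /swap_idx (gtn_eqF (ltnSn i)) eqxx. Qed.

Lemma swap_idx_id i j : j != i -> j != i.+1 -> swap_idx i j = j.
Proof. by rewrite /swap_idx => /negbTE-> /negbTE->. Qed.

Lemma ytl_local (K : fieldType) (A : unitAlgType K) (d n : nat) (u : A) (g t : nat -> A) :
    [pchar K] =i pred0 -> (1 <= d)%N -> is_YTL_family d n u g t ->
  forall i, (1 <= i < n.-1)%N ->
  [/\ (t i - t i.+2) * (1 + g i) + (t i - t i.+1) * (g i.+1 + g i.+1 * g i) = 0,
      (t i.+2 - t i) * (1 + g i.+1) + (t i.+2 - t i.+1) * (g i + g i * g i.+1) = 0,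
      (t i.+2 - t i.+1) * (t i.+2 - t i) * (g i + 1) = 0,
      (t i - t i.+2) * (t i - t i.+1) * (g i.+1 + 1) = 0 &
      (t i - t i.+1) * (t i.+1 - t i.+2) * (t i - t i.+2) = 0].
Proof.
move=> charK0 hd [[_ [braid [tt [tg [td _]]]]] S3] i hi.
have gt k j : (i <= k <= i.+1)%N -> (i <= j <= i.+2)%N ->
    g k * t (swap_idx k j) = t j * g k.
  by move=> hk hj; rewrite tg //; lia.
have g1a : g i * t i = t i.+1 * g i by rewrite -gt ?swap_idx_r //; lia.
have g1b : g i * t i.+1 = t i * g i by rewrite -gt ?swap_idx_l //; lia.
have g1c : g i * t i.+2 = t i.+2 * g i by rewrite -gt ?swap_idx_id //; lia.
have g2a : g i.+1 * t i = t i * g i.+1 by rewrite -gt ?swap_idx_id //; lia.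
have g2b : g i.+1 * t i.+1 = t i.+2 * g i.+1 by rewrite -gt ?swap_idx_r //; lia.
have g2c : g i.+1 * t i.+2 = t i.+1 * g i.+1 by rewrite -gt ?swap_idx_l //; lia.
apply: (local_relations (d := d) _ _ _ _ _ _ _ g1a g1b g1c g2a g2b g2c).
- by move=> w; apply: char0_natmul_inj.
all: first [apply: tt | apply: td | apply: braid | apply: S3]; lia.
Qed.

Unset Implicit Arguments.

Theorem mainTheorem12 (K : fieldType) (charK0 : [pchar K] =i pred0)
    (A : unitAlgType K) (d n : nat) (hd : (1 <= d)%N) (hn : (3 <= n)%N)
    (u : A) (u_unit : u \is a GRing.unit) (u_central : forall x : A, u * x = x * u)
    (g t : nat -> A) (hYTL : is_YTL_family d n u g t) :
  (forall i, (1 <= i < n.-1)%N ->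
        g i * g i.+1 * g i + g i * g i.+1 + g i.+1 * g i + g i + g i.+1 + 1 = 0) /\
      (forall i, (1 <= i < n.-1)%N ->
        (t i - t i.+2) * (1 + g i) + (t i - t i.+1) * (g i.+1 + g i.+1 * g i) = 0) /\
      (forall i, (1 <= i < n.-1)%N ->
        (t i.+2 - t i) * (1 + g i.+1) + (t i.+2 - t i.+1) * (g i + g i * g i.+1) = 0) /\
      (forall i, (1 <= i < n.-1)%N ->
        (t i.+2 - t i.+1) * (t i.+2 - t i) * (g i + 1) = 0) /\
      (forall i, (1 < i <= n.-1)%N ->
        (t i.-1 - t i.+1) * (t i.-1 - t i) * (g i + 1) = 0) /\
      (forall i, (1 <= i < n.-1)%N ->
        (t i - t i.+1) * (t i.+1 - t i.+2) * (t i - t i.+2) = 0).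
Proof.
have local := @ytl_local K A d n u g t charK0 hd hYTL.
split; first by move=> i hi; apply: hYTL.2; lia.
do 3 (split; first by move=> i /local []).
split; last by move=> i /local [].
(* relation (5) at i is the fourth local relation at i - 1 *)
by move=> [|i] //= hi; case: (local i); first lia.
Qed.
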